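(* Let $G$ be a (strong) placement game played on a board $B$. Then there exist simplicial complexes $\Delta$ and $\Gamma$ on the vertex set $\{x_1,\dots,x_n,y_1,\dots,y_o\}$ such that $G$ played on $B$ is equivalent to the game played on $\Gamma$ with the Illegal Ruleset, and equivalent to the game played on $\Delta$ with the Legal Ruleset; that is, under the identification of positions of $G$ with sets of occupied vertices described below, the legal positions of $G$ on $B$ are exactly the legal positions of each of these games (one may take $\Delta=\Delta_{G,B}$, the legal complex, and $\Gamma=\Gamma_{G,B}$, the illegal complex).
   Context: A combinatorial game is a two-player game (players Left and Right) of perfect information and no chance, given by a set of positions, a starting position, and rules specifying legal moves; a legal position is one reachable from the starting position by legal moves. The board is a graph. A (strong) placement game is a combinatorial game such that: (i) the starting position is the empty board; (ii) players place pieces on empty spaces of the board according to the rules; (iii) pieces are never moved or removed; (iv) if a position can be reached by a sequence of legal moves, then every sequence of moves leading to this position consists only of legal moves. Positions are not assumed to alternate between players. A basic position is a board with exactly one piece placed. Label the basic positions by indices; a position of $G$ is identified with the set of vertices of $\{x_1,\dots,x_n,y_1,\dots,y_o\}$ containing $x_i$ iff Left has placed in basic position $i$ and $y_j$ iff Right has placed in basic position $j$. The legal complex $\Delta_{G,B}$ is the simplicial complex whose faces are the sets corresponding to legal positions (equivalently, subsets of the set of a legal position); the illegal complex $\Gamma_{G,B}$ is the simplicial complex whose facets are the sets corresponding to minimal illegal positions. Illegal Ruleset on a simplicial complex $\Gamma$: (1) Left may only play (place pieces) on vertices labelled $x_i$ and Right only on vertices labelled $y_i$; (2) for every facet of $\Gamma$,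 the occupied vertices may not include all vertices of that facet. Legal Ruleset on a simplicial complex $\Delta$: (1) Left may only play on vertices labelled $x_i$ and Right only on vertices labelled $y_i$; (2) the set of occupied vertices must be a face of $\Delta$. *)

From mathcomp Require Import all_boot.
Set Implicit Arguments. Unset Strict Implicit. Unset Printing Implicit Defensive.

(* Vertex set {x_1..x_n, y_1..y_o}: inl i = x_(i+1) (Left), inr j = y_(j+1) (Right). *)
Definition vtx (n o : nat) : finType := ('I_n + 'I_o)%type.

Section Games.
Variables n o : nat.
Notation V := (vtx n o).

Definition family := {set V} -> Prop.

Definition simplicial_complex (K : family) : Prop :=
  forall S T : {set V}, K S -> T \subset S -> K T.

Definition facet (K : family) (F : {set V}) : Prop :=
  K F /\ forall S : {set V}, K S -> F \subset S -> S = F.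

(* A ruleset: [mv P v] says that placing a piece on vertex v (by Left if v is
   an x-vertex, by Right if it is a y-vertex) is a legal move in position P.
   Positions do not alternate between players. *)
Definition rule := {set V} -> V -> Prop.

Inductive reach (mv : rule) : {set V} -> Prop :=
| reach0 : reach mv set0
| reachS P v : reach mv P -> v \notin P -> mv P v -> reach mv (v |: P).

Definition strong_placement (mv : rule) : Prop :=
  forall P, reach mv P ->
  forall s : seq V, uniq s -> [set x in s] = P ->
  forall (x0 : V) k, k < size s -> mv [set x in take k s] (nth x0 s k).

Definition legal_complex (mv : rule) : family := fun S => reach mv S.

Definition min_illegal (mv : rule) (S : {set V}) : Prop :=
  ~ reach mv S /\ forall T : {set V}, T \proper S -> reach mv T.

Definition illegal_complex (mv : rule) : family :=
  fun S => exists F, min_illegal mv F /\ S \subset F.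

Definition illegal_ruleset (Gam : family) : rule :=
  fun P v => ~ exists F, facet Gam F /\ F \subset v |: P.

Definition legal_ruleset (Del : family) : rule :=
  fun P v => Del (v |: P).

End Games.

(* Strong placement makes legal positions closed under subsets: list a subset
   first in an ordering of a legal position, and every prefix of that ordering
   is reached by legal moves.  Hence a position is illegal exactly when it
   contains a minimal illegal one, i.e. a facet of the illegal complex, and
   both rulesets accept a move precisely when the resulting position is a
   legal position of the original game. *)

From Stdlib Require Import Classical.
From mathcomp Require Import all_boot.

Set Implicit Arguments.
Unset Strict Implicit.
Unset Printing Implicit Defensive.

Section PlacementGame.
Variables n o : nat.
Notation V := (vtx n o).
Variable mv : rule n o.

Lemma reach_by_extension (r : rule n o) :
  (forall P v, r P v <-> reach mv (v |: P)) ->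
  forall P, reach mv P <-> reach r P.
Proof.
move=> rE P; split; elim=> [|Q v reachQ IHQ vQ moveQv]; try exact: reach0.
- by apply: reachS => //; apply/rE; apply: reachS.
- exact/rE.
Qed.

Lemma exists_min_illegal_subset (S : {set V}) :
  ~ reach mv S -> exists F, min_illegal mv F /\ F \subset S.
Proof.
elim: {S}_.+1 {-2}S (ltnSn #|S|) => // k IHk S ltSk notS.
case: (classic (forall T : {set V}, T \proper S -> reach mv T)) => [minS|].
  by exists S; split.
move=> /(not_all_ex_not _ _)[T /(imply_to_and (T \proper S))[ltTS notT]].
have ltTk : #|T| < k := leq_trans (proper_card ltTS) ltSk.
have [F [minF sFT]] := IHk T ltTk notT.
by exists F; split; last exact: subset_trans sFT (proper_sub ltTS).
Qed.

Lemma facet_illegal_complex (F : {set V}) :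
  facet (illegal_complex mv) F <-> min_illegal mv F.
Proof.
split=> [[[F' [minF' sFF']] maxF]|minF].
  by rewrite -(maxF F' _ sFF'); last by exists F'.
split=> [|S [F' [minF' sSF']] sFS]; first by exists F.
have sFF' := subset_trans sFS sSF'.
have eqFF' : F = F'.
  apply/eqP; rewrite eqEproper sFF' /=; apply/negP => ltFF'.
  by case: minF => notF _; apply: notF; case: minF' => _; apply.
by subst F'; apply/eqP; rewrite eqEsubset sFS sSF'.
Qed.

Hypothesis mv_strong : strong_placement mv.

Lemma reach_take (s : seq V) k : uniq s -> reach mv [set x in s] ->
  k <= size s -> reach mv [set x in take k s].
Proof.
move=> uniq_s reach_s; elim: k => [|k IHk] ltks.
  rewrite take0 (_ : [set x in [::] : seq V] = set0); first exact: reach0.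
  by apply/setP => x; rewrite !inE.
have x0 : V by case: (s) ltks => // a _; exact: a.
have set_rcons (t : seq V) a : [set x in rcons t a] = a |: [set x in t].
  by apply/setP => x; rewrite !inE mem_rcons in_cons.
rewrite (take_nth x0 ltks) set_rcons.
apply: reachS; first exact: IHk (ltnW ltks).
- have /hasPn notin : ~~ has (mem (take k s)) (drop k s).
    by move: uniq_s; rewrite -{1}(cat_take_drop k s) cat_uniq => /and3P[].
  rewrite inE -{1}[k]addn0 -nth_drop; apply: notin.
  by apply: mem_nth; rewrite size_drop subn_gt0.
- exact: mv_strong reach_s s uniq_s (erefl _) x0 k ltks.
Qed.

Lemma reach_subset (P T : {set V}) : reach mv P -> T \subset P -> reach mv T.
Proof.
move=> reachP sTP; set s := enum T ++ enum (P :\: T).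
have sE : [set x in s] = P.
  apply/setP => x; rewrite !inE mem_cat !mem_enum !inE.
  by case: (boolP (x \in T)) => //= /(subsetP sTP).
have uniq_s : uniq s.
  rewrite cat_uniq !enum_uniq andbT /=; apply/hasPn => x.
  by rewrite !mem_enum !inE => /andP[].
rewrite -sE in reachP.
have lenT : size (enum T) <= size s by rewrite size_cat leq_addr.
have := reach_take uniq_s reachP lenT.
rewrite take_size_cat // (_ : [set x in enum T] = T) //.
by apply/setP => x; rewrite inE mem_enum.
Qed.

Lemma illegal_rulesetP (P : {set V}) (v : V) :
  illegal_ruleset (illegal_complex mv) P v <-> reach mv (v |: P).
Proof.
split=> [noF|reachvP [F [/facet_illegal_complex [notF _] sFvP]]].
  apply: NNPP => notvP; apply: noF.
  have [F [minF sFvP]] := exists_min_illegal_subset notvP.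
  by exists F; split => //; apply/facet_illegal_complex.
exact: notF (reach_subset reachvP sFvP).
Qed.

End PlacementGame.

Theorem theorem4p4 (n o : nat) (mv : rule n o) (Hstrong : strong_placement mv) :
  simplicial_complex (legal_complex mv) /\
  simplicial_complex (illegal_complex mv) /\
  (forall P : {set vtx n o},
     reach mv P <-> reach (illegal_ruleset (illegal_complex mv)) P) /\
  (forall P : {set vtx n o},
     reach mv P <-> reach (legal_ruleset (legal_complex mv)) P).
Proof.
split; first by move=> S T; apply: reach_subset.
split.
  by move=> S T [F [minF sSF]] sTS; exists F; split; last exact: subset_trans sTS sSF.
by split; apply: reach_by_extension => P v; first exact: illegal_rulesetP.
Qed.
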